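(* Let $G$ be a finite group and $N\lhd G$ a normal subgroup which is simple and non-abelian. Let $r\in N$. If $\mathcal O_r^G\cap N\neq \mathcal O_r^N$, then $\mathcal O_r^G$ is of type C.
   Context: For $H\leqslant G$ and $g\in G$, $\mathcal O_g^H$ is the orbit of $g$ under conjugation by $H$. A conjugacy class $\mathcal O$ of a finite group $G$ is of type C if there are $H\leqslant G$ and $r,s\in H\cap\mathcal O$ such that $rs\neq sr$, $H=\langle \mathcal O_r^H,\mathcal O_s^H\rangle$, $\mathcal O_r^H\neq\mathcal O_s^H$, and either $\min\{|\mathcal O_r^H|,|\mathcal O_s^H|\}>2$ or $\max\{|\mathcal O_r^H|,|\mathcal O_s^H|\}>4$. *)

From mathcomp Require Import all_boot all_fingroup.
Set Implicit Arguments. Unset Strict Implicit. Unset Printing Implicit Defensive.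
Local Open Scope group_scope.

Definition orb (gT : finGroupType) (H : {set gT}) (g : gT) : {set gT} := g ^: H.

Definition typeC (gT : finGroupType) (G : {group gT}) (O : {set gT}) : Prop :=
  exists (H : {group gT}) (r s : gT),
    [/\ H \subset G, r \in H :&: O, s \in H :&: O & r * s != s * r] /\
    [/\ (H :=: <<orb H r :|: orb H s>>), orb H r != orb H s &
        ((2 < minn #|orb H r| #|orb H s|)%N \/ (4 < maxn #|orb H r| #|orb H s|)%N)].

From mathcomp Require Import all_boot all_fingroup all_solvable.
Set Implicit Arguments.
Unset Strict Implicit.
Local Open Scope group_scope.

(* Pick s in the G-class of r lying in N but outside the N-class of r,
   and take H := N.  In a simple group every nontrivial class generates the
   whole group, so if the N-classes of r and s commuted elementwise, N would be
   abelian; this yields non-commuting representatives.  A nontrivial class of a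
   non-abelian simple group has more than two elements, since a centraliser of
   index at most 2 is normal. *)

Lemma index_le2_normal (gT : finGroupType) (G H : {group gT}) :
  H \subset G -> (#|G : H| <= 2)%N -> H <| G.
Proof.
move=> sHG; have := indexg_gt0 G H.
case iGH: #|G : H| => [|[|[|k]]] //= _ _.
  by rewrite (index1g sHG iGH) normal_refl.
exact: index2_normal.
Qed.

Section SimpleClasses.

Variables (gT : finGroupType) (N : {group gT}).
Hypothesis simN : simple N.

Lemma simple_normal_eq (H : {group gT}) (x : gT) :
  H <| N -> x \in H -> x != 1 -> H :=: N.
Proof.
case/simpleP: simN => _ minN nHN xH ntx.
have [H1 | //] := minN H nHN.
by move: xH; rewrite H1 inE => /eqP x1; rewrite x1 eqxx in ntx.
Qed.

Lemma gen_class_simple (x : gT) : x \in N -> x != 1 -> <<x ^: N>> = N.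
Proof.
move=> xN ntx; apply: (@simple_normal_eq <<x ^: N>>%G x _ _ ntx).
  rewrite /normal gen_subG class_subG //=.
  exact: subset_trans (class_norm x N) (norm_gen _).
by rewrite mem_gen // class_refl.
Qed.

Hypothesis nabN : ~~ abelian N.

Lemma simple_classes_not_commute (x y : gT) :
    x \in N -> y \in N -> x != 1 -> y != 1 ->
  exists a b, [/\ a \in x ^: N, b \in y ^: N & a * b != b * a].
Proof.
move=> xN yN ntx nty.
suff /exists_inP [a xa /exists_inP [b yb nab]] :
    [exists a in x ^: N, exists b in y ^: N, a * b != b * a] by exists a, b.
apply: contraR nabN => /exists_inPn nc.
suff: <<y ^: N>> \subset 'C(<<x ^: N>>) by rewrite !gen_class_simple.
rewrite cent_gen gen_subG; apply/centsP => b yb a xa; apply/eqP.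
by have /exists_inPn/(_ b yb) := nc a xa; rewrite negbK eq_sym.
Qed.

Lemma card_class_simple_gt2 (x : gT) :
  x \in N -> x != 1 -> (2 < #|x ^: N|)%N.
Proof.
move=> xN ntx; rewrite -index_cent1 ltnNge; apply/negP => le2.
have CN : 'C_N[x] :=: N.
  by apply: simple_normal_eq (index_le2_normal (subsetIl _ _) le2) _ ntx;
     rewrite inE xN cent1id.
have ZN : 'Z(N) :=: N.
  apply: simple_normal_eq (center_normal N) _ ntx.
  by rewrite inE xN -sub_cent1 -{1}CN subsetIr.
by move: nabN; rewrite -ZN center_abelian.
Qed.

End SimpleClasses.

Lemma typeC_simple_classes (gT : finGroupType) (G N : {group gT}) (r s : gT) :
    N \subset G -> simple N -> ~~ abelian N -> r \in N -> s \in N ->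
    s \in r ^: G -> s ^: N != r ^: N ->
  typeC G (orb G r).
Proof.
move=> sNG simN nabN rN sN srG neq.
have ntr : r != 1.
  apply: contra neq => /eqP r1; move: srG; rewrite r1 class1G => /set1P ->.
  by rewrite class1G.
have nts : s != 1 by case/imsetP: srG => g _ ->; rewrite conjg_eq1.
have [a [b [ar bs nab]]] := simple_classes_not_commute simN nabN rN sN ntr nts.
have aN : a \in N by rewrite (subsetP (class_subG rN (subxx N))).
have bN : b \in N by rewrite (subsetP (class_subG sN (subxx N))).
have eqa : a ^: N = r ^: N := class_eqP ar.
have eqb : b ^: N = s ^: N := class_eqP bs.
have nta : a != 1 by rewrite -(classG_eq1 N) eqa classG_eq1.
have ntb : b != 1 by rewrite -(classG_eq1 N) eqb classG_eq1.
have classNG z : z ^: N \subset z ^: G by apply: imsetS.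
exists N, a, b; rewrite /orb eqa eqb; split; first split => //.
- by rewrite inE aN (subsetP (classNG r)).
- by rewrite inE bN -(class_eqP srG) (subsetP (classNG s)).
split; rewrite -?eqa -?eqb.
- apply/eqP; rewrite eqEsubset gen_subG subUset !class_subG // andbT.
  by rewrite -{1}(gen_class_simple simN aN) ?genS ?subsetUl.
- by rewrite eqa eqb eq_sym.
- by left; rewrite leq_min !card_class_simple_gt2.
Qed.

Theorem mainTheorem4 (gT : finGroupType) (G N : {group gT}) (r : gT) :
  N <| G -> simple N -> ~~ abelian N -> r \in N ->
  orb G r :&: N != orb N r ->
  typeC G (orb G r).
Proof.
move=> /andP [sNG _] simN nabN rN neq.
have classNG : orb N r \subset orb G r :&: N.
  by rewrite subsetI class_subG ?imsetS.
have /subsetPn [s /setIP [srG sN] snr] : ~~ (orb G r :&: N \subset orb N r).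
  by apply: contra neq => sup; rewrite eqEsubset sup classNG.
apply: (typeC_simple_classes sNG simN nabN rN sN srG).
by apply: contra snr; rewrite /orb => /eqP <-; apply: class_refl.
Qed.
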